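(* Let $(A,+,\cdot)$ be a left nilpotent pre-Lie ring of cardinality $p^n$ with $p>n+1$ prime, and let $\Omega:A\to A$ be the inverse of $W$, where $W(a)=e^{L_a}(1)-1$. Then there exist integers $\alpha_w$, only finitely many nonzero and not depending on $a$, such that for every $a\in A$, $$\Omega(a)=a+\sum_w\alpha_w\, w(a),$$ where $w$ ranges over non-associative monomials (words with a bracketing) of degree at least $2$ in one variable $x$, and $w(a)$ denotes the evaluation of $w$ at $x=a$ using the product $\cdot$ (e.g. if $w=x\cdot(x\cdot x)$ then $w(a)=a\cdot(a\cdot a)$).
   Context: A pre-Lie ring is an abelian group $(A,+)$ with a biadditive product $\cdot$ satisfying $(x\cdot y)\cdot z-x\cdot(y\cdot z)=(y\cdot x)\cdot z-y\cdot(x\cdot z)$. It is left nilpotent if $A^m=0$ for some $m$, where $A^1=A$ and $A^{i+1}$ is the additive subgroup generated by $a\cdot b$, $a\in A$, $b\in A^i$. Let $A^{\mathrm{id}}=A\times\mathbb Z$ with $(r,m)+(s,m')=(r+s,m+m')$, $(r,m)\cdot(s,m')=(r\cdot s+ms+m'r,mm')$; identify $A$ with $A\times\{0\}$, put $1=(0,1)$. For $a\in A$ let $L_a(x)=a\cdot x$ and $e^{L_a}(x)=\sum_{j\ge 0}\frac{1}{j!}L_a^j(x)$ (finite sum; the needed factorials are invertible modulo $p^n$). $W(a)=e^{L_a}(1)-1\in A$ is a bijection $A\to A$. *)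

From HB Require Import structures.
From mathcomp Require Import all_boot all_order all_algebra.
Set Implicit Arguments. Unset Strict Implicit. Unset Printing Implicit Defensive.
Import Order.TTheory GRing.Theory Num.Theory.
Local Open Scope ring_scope.

Inductive monomial : Type :=
| MX : monomial
| MMul : monomial -> monomial -> monomial.

Fixpoint monomial_eqb (u v : monomial) : bool :=
  match u, v with
  | MX, MX => true
  | MMul u1 u2, MMul v1 v2 => monomial_eqb u1 v1 && monomial_eqb u2 v2
  | _, _ => false
  end.

Lemma monomial_eqP : Equality.axiom monomial_eqb.
Proof.
elim=> [|u1 IH1 u2 IH2] [|v1 v2] /=; try by constructor.
case: (IH1 v1) => [->|h]; last by constructor; case.
case: (IH2 v2) => [->|h]; last by constructor; case.
by constructor.
Qed.

HB.instance Definition _ := hasDecEq.Build monomial monomial_eqP.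

Fixpoint mdeg (w : monomial) : nat :=
  match w with MX => 1%N | MMul u v => (mdeg u + mdeg v)%N end.

Section PreLie.
Variable A : finZmodType.
Variable mul : A -> A -> A.

Fixpoint meval (w : monomial) (a : A) : A :=
  match w with MX => a | MMul u v => mul (meval u a) (meval v a) end.

(* lpow i x  <->  x \in A^i  (A^1 = A, A^{i+1} = additive subgroup generated
   by the products a*b with a in A, b in A^i).  A^0 is empty (unused). *)
Inductive lpow : nat -> A -> Prop :=
| lpow1 x : lpow 1 x
| lpowS_mul i a b : lpow i.+1 b -> lpow i.+2 (mul a b)
| lpowS_0 i : lpow i.+2 0
| lpowS_sub i x y : lpow i.+2 x -> lpow i.+2 y -> lpow i.+2 (x - y).

Definition left_nilpotent : Prop :=
  exists m : nat, (0 < m)%N /\ forall x, lpow m x -> x = 0.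

(* The ring A^id = A x Z *)
Definition idmul (u v : A * int) : A * int :=
  (mul u.1 v.1 + v.1 *~ u.2 + u.1 *~ v.2, u.2 * v.2).

Definition idone : A * int := (0, 1).

Definition Lid (a : A) (u : A * int) : A * int := idmul (a, 0) u.

Definition invfact (j : nat) : nat := val ((j`!%:R : 'Z_#|A|)^-1).

(* e^{L_a}(u) = sum_{j>=0} (1/j!) L_a^j(u).  For j >= 1, L_a^j(u) lies in
   A = A x {0}, so 1/j! acts on it as multiplication modulo #|A|.
   The sum is truncated at j = #|A|, beyond which all terms vanish for a
   left nilpotent A of order p^n (A^{n+1} = 0). *)
Definition expL (a : A) (u : A * int) : A * int :=
  (u.1 + \sum_(1 <= j < #|A|.+1) ((iter j (Lid a) u).1 *+ invfact j), u.2).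

Definition W (a : A) : A := (expL a idone).1 - idone.1.

End PreLie.

From HB Require Import structures.
From mathcomp Require Import all_boot all_algebra all_fingroup.
Import GRing.Theory.
Set Implicit Arguments. Unset Strict Implicit. Unset Printing Implicit Defensive.
Local Open Scope ring_scope.

(* W(a) = a + sum_(2 <= j <= #|A|) (1/j!) a(a(...(a a))) is a polynomial map
   "identity plus terms of degree >= 2" with integer coefficients (1/j! being
   represented by an integer), and such maps are closed under composition.
   Since W is a bijection of the finite set A, some iterate W^k is the
   identity, so Omega = W^(k-1) is again of that form. *)

(* A non-associative integer polynomial in one variable, as a list of
   monomials with coefficients (repetitions allowed). *)
Definition npoly := seq (monomial * int).

Fixpoint npmul (P Q : npoly) : npoly :=
  if P is t :: P' then [seq (MMul t.1 u.1, t.2 * u.2) | u <- Q] ++ npmul P' Q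
  else [::].

Fixpoint npsubst (w : monomial) (Q : npoly) : npoly :=
  if w is MMul u v then npmul (npsubst u Q) (npsubst v Q) else Q.

Definition npscale (k : int) (P : npoly) : npoly :=
  [seq (t.1, t.2 * k) | t <- P].

Fixpoint npcomp (P Q : npoly) : npoly :=
  if P is t :: P' then npscale t.2 (npsubst t.1 Q) ++ npcomp P' Q else [::].

Definition npX : npoly := [:: (MX, 1)].

(* [unipotent P] stands for the map a |-> a + P(a); [unicomp P Q] represents
   its composite with [unipotent Q]. *)
Definition unicomp (P Q : npoly) : npoly := Q ++ npcomp P (npX ++ Q).

Definition mindeg_ge (k : nat) (P : npoly) : bool :=
  all (fun t => k <= mdeg t.1)%N P.

Lemma mindeg_ge_cat k P Q :
  mindeg_ge k (P ++ Q) = mindeg_ge k P && mindeg_ge k Q.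
Proof. exact: all_cat. Qed.

Lemma mindeg_geW i j P : (i <= j)%N -> mindeg_ge j P -> mindeg_ge i P.
Proof. by move=> le_ij; apply: sub_all => t /= /(leq_trans le_ij). Qed.

Lemma mindeg_ge_npmul i j P Q :
  mindeg_ge i P -> mindeg_ge j Q -> mindeg_ge (i + j) (npmul P Q).
Proof.
move=> + degQ; elim: P => [|t P IH] //= /andP[degt degP].
rewrite mindeg_ge_cat IH // andbT /mindeg_ge all_map.
by apply: sub_all degQ => u /= degu; rewrite leq_add.
Qed.

Lemma mindeg_ge_npsubst w Q :
  mindeg_ge 1 Q -> mindeg_ge (mdeg w) (npsubst w Q).
Proof. by move=> degQ; elim: w => //= u IHu v IHv; apply: mindeg_ge_npmul. Qed.

Lemma mindeg_ge_npcomp P Q :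
  mindeg_ge 2 P -> mindeg_ge 1 Q -> mindeg_ge 2 (npcomp P Q).
Proof.
move=> + degQ; elim: P => [|t P IH] //= /andP[degt degP].
rewrite mindeg_ge_cat IH // andbT /mindeg_ge all_map.
exact: mindeg_geW degt (mindeg_ge_npsubst _ degQ).
Qed.

Lemma mindeg_ge_unicomp P Q :
  mindeg_ge 2 P -> mindeg_ge 2 Q -> mindeg_ge 2 (unicomp P Q).
Proof.
move=> degP degQ; rewrite /unicomp mindeg_ge_cat degQ.
by apply: mindeg_ge_npcomp; rewrite // mindeg_ge_cat (mindeg_geW _ degQ).
Qed.

Lemma iter_perm_inv (T : finType) (f g : T -> T) :
  cancel f g -> cancel g f -> exists k, forall x, g x = iter k f x.
Proof.
move=> fK gK; pose s := perm (can_inj fK).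
have iter_ord x : iter #[s]%g f x = x.
  rewrite -[RHS]perm1 -(expg_order s) permX.
  by apply: eq_iter => y; rewrite permE.
exists (#[s]%g).-1 => x.
by rewrite -{1}(iter_ord x) -(prednK (order_gt0 s)) iterS fK.
Qed.

Lemma morph_add0 (U V : zmodType) (f : U -> V) :
  {morph f : x y / x + y} -> f 0 = 0.
Proof. by move=> fD; apply: (addrI (f 0)); rewrite -fD !addr0. Qed.

Section Evaluation.

Variables (A : finZmodType) (mul : A -> A -> A).
Hypothesis mulDl : forall x y z : A, mul (x + y) z = mul x z + mul y z.
Hypothesis mulDr : forall x y z : A, mul x (y + z) = mul x y + mul x z.

Definition mul_additivel (a : A) : {additive A -> A} :=
  HB.pack (mul a)
    (GRing.isNmodMorphism.Build A A (mul a) (morph_add0 (mulDr a), mulDr a)).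

Definition mul_additiver (b : A) : {additive A -> A} :=
  HB.pack (mul^~ b)
    (GRing.isNmodMorphism.Build A A (mul^~ b)
       (morph_add0 (fun x y => mulDl x y b), fun x y => mulDl x y b)).

Lemma mul0x b : mul 0 b = 0. Proof. exact: raddf0 (mul_additiver b). Qed.
Lemma mulx0 a : mul a 0 = 0. Proof. exact: raddf0 (mul_additivel a). Qed.

Lemma mulMzx x b k : mul (x *~ k) b = mul x b *~ k.
Proof. exact: (raddfMz (mul_additiver b) k x). Qed.

Lemma mulxMz a y k : mul a (y *~ k) = mul a y *~ k.
Proof. exact: (raddfMz (mul_additivel a) k y). Qed.

Lemma mulx_sum a (I : Type) (r : seq I) (F : I -> A) :
  mul a (\sum_(i <- r) F i) = \sum_(i <- r) mul a (F i).
Proof. exact: (raddf_sum (mul_additivel a) r xpredT F). Qed.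

Definition npeval (P : npoly) (a : A) : A :=
  \sum_(t <- P) meval mul t.1 a *~ t.2.

Definition unipotent (P : npoly) (a : A) : A := a + npeval P a.

Lemma npeval_cat P Q a : npeval (P ++ Q) a = npeval P a + npeval Q a.
Proof. exact: big_cat. Qed.

Lemma npeval_npX a : npeval npX a = a.
Proof. by rewrite /npeval big_seq1. Qed.

Lemma npeval_npmul P Q a :
  npeval (npmul P Q) a = mul (npeval P a) (npeval Q a).
Proof.
elim: P => [|t P IH] /=; first by rewrite /npeval big_nil mul0x.
rewrite npeval_cat IH /npeval big_cons [in RHS]mulDl big_map; congr (_ + _).
rewrite mulMzx mulx_sum mulrz_suml.
by apply: eq_bigr => u _ /=; rewrite mulxMz mulrC mulrzA.
Qed.

Lemma npeval_npsubst w Q a :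
  npeval (npsubst w Q) a = meval mul w (npeval Q a).
Proof. by elim: w => //= u IHu v IHv; rewrite npeval_npmul IHu IHv. Qed.

Lemma npeval_npscale k P a : npeval (npscale k P) a = npeval P a *~ k.
Proof.
rewrite /npeval big_map mulrz_suml.
by apply: eq_bigr => t _; rewrite mulrzA.
Qed.

Lemma npeval_npcomp P Q a : npeval (npcomp P Q) a = npeval P (npeval Q a).
Proof.
elim: P => [|t P IH] /=; first by rewrite /npeval !big_nil.
by rewrite npeval_cat IH npeval_npscale npeval_npsubst [in RHS]/npeval big_cons.
Qed.

Lemma unipotent_comp P Q a :
  unipotent P (unipotent Q a) = unipotent (unicomp P Q) a.
Proof.
rewrite /unipotent /unicomp !npeval_cat npeval_npcomp npeval_cat npeval_npX.
by rewrite addrA.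
Qed.

Lemma iter_unipotent P k : mindeg_ge 2 P ->
  exists2 Q, mindeg_ge 2 Q & forall a, iter k (unipotent P) a = unipotent Q a.
Proof.
move=> degP; elim: k => [|k [Q degQ iterQ]].
  by exists [::] => // a; rewrite /unipotent /npeval big_nil addr0.
exists (unicomp P Q) => [|a]; first exact: mindeg_ge_unicomp.
by rewrite iterS iterQ unipotent_comp.
Qed.

Lemma npeval_collect P : mindeg_ge 2 P ->
  exists (alpha : monomial -> int) (s : seq monomial),
    [/\ uniq s,
        (forall w, alpha w != 0 -> w \in s),
        (forall w, w \in s -> (2 <= mdeg w)%N) &
        forall a, npeval P a = \sum_(w <- s) meval mul w a *~ alpha w].
Proof.
move=> degP; pose s := undup [seq t.1 | t <- P].
exists (fun w => \sum_(t <- P | t.1 == w) t.2), s.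
split; first exact: undup_uniq.
- move=> w; apply: contraR; rewrite mem_undup => w_notin.
  rewrite big1_seq // => t /andP[/eqP tw tP].
  by rewrite -tw map_f in w_notin.
- by move=> w; rewrite mem_undup => /mapP[t tP ->]; apply: (allP degP).
move=> a; under eq_bigr => w _ do rewrite mulrz_sumr big_mkcond.
rewrite exchange_big; apply: eq_big_seq => t tP /=.
rewrite (bigD1_seq t.1) ?undup_uniq ?mem_undup ?map_f //= eqxx big1 ?addr0 //.
by move=> w; rewrite eq_sym => /negbTE ->.
Qed.

Definition rnormed (j : nat) : monomial := iter j (MMul MX) MX.

Lemma mdeg_rnormed j : mdeg (rnormed j) = j.+1.
Proof. by elim: j => //= j ->. Qed.

Lemma iter_Lid_idone a j :
  iter j.+1 (Lid mul a) (idone A) = (meval mul (rnormed j) a, 0).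
Proof.
elim: j => [|j IH]; last by rewrite iterS IH /Lid /idmul /= !mulr0z !addr0 mul0r.
by rewrite /Lid /idmul /= mulx0 mulr0z mulr1z !add0r mul0r.
Qed.

Definition W_npoly : npoly :=
  [seq (rnormed j, Posz (invfact A j.+1)) | j <- index_iota 1 #|A|].

Lemma mindeg_ge_W_npoly : mindeg_ge 2 W_npoly.
Proof.
rewrite /mindeg_ge all_map; apply/allP => j.
by rewrite mem_index_iota /= mdeg_rnormed ltnS => /andP[].
Qed.

Lemma invfact1 : invfact A 1 = 1%N.
Proof. by rewrite /invfact /= invr1. Qed.

Lemma W_unipotent a : W mul a = unipotent W_npoly a.
Proof.
have cardA_gt0 : (0 < #|A|)%N by apply/card_gt0P; exists 0.
rewrite /W /expL /= subr0 add0r big_ltn ?ltnS // iter_Lid_idone invfact1 /=.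
rewrite mulr1n big_add1 /unipotent /npeval /W_npoly big_map; congr (_ + _).
by apply: eq_bigr => j _; rewrite iter_Lid_idone -pmulrn.
Qed.

End Evaluation.

Theorem lemma10 (A : finZmodType) (mul : A -> A -> A) (p n : nat)
  (mulDl : forall x y z : A, mul (x + y) z = mul x z + mul y z)
  (mulDr : forall x y z : A, mul x (y + z) = mul x y + mul x z)
  (prelie : forall x y z : A,
     mul (mul x y) z - mul x (mul y z) = mul (mul y x) z - mul y (mul x z))
  (lnil : left_nilpotent mul)
  (p_prime : prime p) (cardA : #|A| = (p ^ n)%N) (p_big : (n.+1 < p)%N)
  (Omega : A -> A)
  (OmegaK : cancel Omega (W mul)) (WK : cancel (W mul) Omega) :
  exists (alpha : monomial -> int) (s : seq monomial),
    [/\ uniq s,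
        (forall w, alpha w != 0 -> w \in s),
        (forall w, w \in s -> (2 <= mdeg w)%N) &
        forall a : A, Omega a = a + \sum_(w <- s) (meval mul w a) *~ alpha w].
Proof.
have [k Omega_iter] := iter_perm_inv WK OmegaK.
have [Q degQ iterQ] := iter_unipotent mulDl mulDr k (mindeg_ge_W_npoly A).
have [alpha [s [s_uniq alpha_supp s_deg evalQ]]] := npeval_collect mul degQ.
exists alpha, s; split=> // a.
rewrite -evalQ Omega_iter -[RHS]/(unipotent mul Q a) -iterQ.
by apply: eq_iter; apply: W_unipotent.
Qed.
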